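(* Let $\kappa$ be a regular uncountable cardinal and $I$ an ideal on $\kappa$ with $I\subseteq NS_\kappa$, and let $L=\{\lambda+1:\lambda<\kappa\text{ a limit ordinal}\}$. Suppose $L\in P(I)$. Then for every stationary set $Q\subseteq\kappa$ consisting of limit ordinals there is $Y\subseteq L$ with $Y\in I$, $B(Y)\subseteq Q$, and $B(Y)$ stationary, where $B(Y)=\{\lambda:\lambda+1\in Y\}$.
   Context: An ideal on $\kappa$ is a family of subsets of $\kappa$ closed under subsets and finite unions, which is $<\kappa$-complete and contains all singletons. $NS_\kappa$ is the ideal of nonstationary subsets of $\kappa$. For $A\subseteq\kappa$ and $X_\alpha\subseteq\kappa$, $\bigtriangledown_{\alpha\in A}X_\alpha=\{\xi<\kappa:\exists\alpha<\xi\,(\alpha\in A\wedge \xi\in X_\alpha)\}$. An ideal is pleasant if whenever $A$ and all $X_\alpha$ belong to it, so does $\bigtriangledown_{\alpha\in A}X_\alpha$. The pleasant closure $P(I)$ is built in stages: $P_0(I)=I$; $P_{\beta+1}(I)$ is the ideal generated by $P_\beta(I)$ together with all $\bigtriangledown_{\alpha\in T}X_\alpha$ with $T\in I$ and each $X_\alpha\in P_\beta(I)$; unions at limit stages; $P(I)=\bigcup_\beta P_\beta(I)$ (the smallest pleasant ideal containing $I$). *)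

(* The regular uncountable cardinal kappa is modelled as a
   type T (the set of ordinals < kappa) with a strict well-order lt. *)
From Stdlib Require Import Classical.

Section KappaDefs.
Context {T : Type}.
Variable lt : T -> T -> Prop.

Definition le (a b : T) : Prop := lt a b \/ a = b.

Definition strict_well_order : Prop :=
  (forall a, ~ lt a a) /\
  (forall a b c, lt a b -> lt b c -> lt a c) /\
  (forall a b, lt a b \/ a = b \/ lt b a) /\
  well_founded lt.

Definition injective {A B : Type} (f : A -> B) : Prop :=
  forall x y, f x = f y -> x = y.

Definition is_cardinal : Prop :=
  forall beta : T, ~ exists f : T -> {a : T | lt a beta}, injective f.

Definition uncountable : Prop := ~ exists f : T -> nat, injective f.

Definition cofinal (S : T -> Prop) : Prop :=
  forall beta, exists a, S a /\ le beta a.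

Definition regular : Prop :=
  forall S : T -> Prop, cofinal S -> exists f : T -> {a : T | S a}, injective f.

Definition regular_uncountable_cardinal : Prop :=
  strict_well_order /\ is_cardinal /\ regular /\ uncountable.

Definition is_limit (g : T) : Prop :=
  (exists n, lt n g) /\ (forall n, lt n g -> exists r, lt n r /\ lt r g).

Definition is_succ (l m : T) : Prop :=
  lt l m /\ forall n, lt l n -> le m n.

Definition closed (C : T -> Prop) : Prop :=
  forall g, is_limit g ->
    (forall n, lt n g -> exists c, C c /\ lt n c /\ lt c g) -> C g.

Definition club (C : T -> Prop) : Prop := closed C /\ cofinal C.

Definition stationary (S : T -> Prop) : Prop :=
  forall C, club C -> exists x, S x /\ C x.

Definition nonstationary (S : T -> Prop) : Prop := ~ stationary S.

Definition is_ideal (I : (T -> Prop) -> Prop) : Prop :=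
  (forall A B, I B -> (forall x, A x -> B x) -> I A) /\
  (forall A B, I A -> I B -> I (fun x => A x \/ B x)) /\
  (forall (beta : T) (X : T -> T -> Prop),
      (forall a, lt a beta -> I (X a)) ->
      I (fun x => exists a, lt a beta /\ X a x)) /\
  (forall a, I (fun x => x = a)).

Definition diag_union (A : T -> Prop) (X : T -> T -> Prop) : T -> Prop :=
  fun xi => exists a, lt a xi /\ A a /\ X a xi.

(* pleasant closure P(I): the union of the stages P_beta(I), i.e. the least
   family containing I, closed under the ideal-generation operations and under
   diagonal unions nabla_{a in A} X_a with A in I and all X_a in the family. *)
Inductive Pcl (I : (T -> Prop) -> Prop) : (T -> Prop) -> Prop :=
| Pcl_base : forall A, I A -> Pcl I A
| Pcl_sub : forall A B, Pcl I B -> (forall x, A x -> B x) -> Pcl I A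
| Pcl_union2 : forall A B, Pcl I A -> Pcl I B -> Pcl I (fun x => A x \/ B x)
| Pcl_union : forall (beta : T) (X : T -> T -> Prop),
    (forall a, lt a beta -> Pcl I (X a)) ->
    Pcl I (fun x => exists a, lt a beta /\ X a x)
| Pcl_diag : forall (A : T -> Prop) (X : T -> T -> Prop),
    I A -> (forall a, A a -> Pcl I (X a)) -> Pcl I (diag_union A X).

Definition Lset : T -> Prop :=
  fun m => exists l, is_limit l /\ is_succ l m.

Definition Bset (Y : T -> Prop) : T -> Prop :=
  fun l => exists m, Y m /\ is_succ l m.

End KappaDefs.

From Stdlib Require Import Classical ClassicalEpsilon PeanoNat.

(* Call [A] catching if every stationary set [Q] of limits whose successors
   all lie in [A] contains [B(Y)] for some [Y] in [I] with [B(Y)] stationary;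
   we show by induction on the pleasant closure that every member of [P(I)]
   is catching, and apply this to [L].  Members of [I] catch with
   [Y = A ∩ {λ+1 : λ ∈ Q}].  For a union (finite or of fewer than κ sets) a
   stationary part of [Q] has all its successors in a single piece: this is
   Fodor's lemma, once [Q] is cut above the index bound.  For a diagonal union
   ∇_{α∈A} X_α, a successor λ+1 of it lies in some X_α with α ∈ A and α ≤ λ;
   the λ with α = λ form a subset of [A], which is nonstationary because
   I ⊆ NS_κ, and on the rest α < λ is regressive, so Fodor applies again. *)

Section Kappa.

Context {T : Type}.
Variable lt : T -> T -> Prop.
Hypothesis hk : regular_uncountable_cardinal lt.

Lemma ord_irrefl a : ~ lt a a.
Proof. destruct hk as [[h _] _]. apply h. Qed.

Lemma ord_trans a b c : lt a b -> lt b c -> lt a c.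
Proof. destruct hk as [[_ [h _]] _]. apply h. Qed.

Lemma ord_total a b : lt a b \/ a = b \/ lt b a.
Proof. destruct hk as [[_ [_ [h _]]] _]. apply h. Qed.

Lemma ord_le_lt_trans a b c : le lt a b -> lt b c -> lt a c.
Proof. intros [h | <-] h'; [exact (ord_trans _ _ _ h h') | exact h']. Qed.

Lemma ord_lt_le_trans a b c : lt a b -> le lt b c -> lt a c.
Proof. intros h [h' | <-]; [exact (ord_trans _ _ _ h h') | exact h]. Qed.

Lemma ord_max a b : exists w, le lt a w /\ le lt b w /\ (w = a \/ w = b).
Proof.
  destruct (ord_total a b) as [h | [<- | h]].
  - exists b. unfold le. auto.
  - exists a. unfold le. auto.
  - exists a. unfold le. auto.
Qed.

Lemma ord_least (P : T -> Prop) x :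
  P x -> exists m, P m /\ forall n, P n -> le lt m n.
Proof.
  destruct hk as [[_ [_ [_ hwf]]] _].
  induction x as [x IH] using (well_founded_ind hwf). intro Px.
  destruct (classic (exists n, P n /\ lt n x)) as [[n [Pn hn]] | hmin].
  - exact (IH n hn Pn).
  - exists x. split; [exact Px |]. intros n Pn.
    destruct (ord_total x n) as [h | [h | h]]; unfold le; auto.
    exfalso. apply hmin. eauto.
Qed.

(* Regularity: a family indexed by a set of size < κ is bounded, since its
   range would otherwise be cofinal and hence of size κ. *)
Lemma small_family_bounded (J : Type) (F : J -> T) :
  ~ (exists f : T -> J, injective f) -> exists u, forall j, lt (F j) u.
Proof.
  intro hJ. apply NNPP. intro hunb.
  assert (hcof : cofinal lt (fun s => exists j, F j = s)).
  { intro g. apply NNPP. intro hg. apply hunb. exists g. intro j.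
    destruct (ord_total (F j) g) as [h | [h | h]]; [exact h | |];
      exfalso; apply hg; exists (F j); split; eauto; unfold le; auto. }
  destruct hk as [_ [_ [hreg _]]]. destruct (hreg _ hcof) as [f hf].
  destruct (choice (fun (s : {s | exists j, F j = s}) j => F j = proj1_sig s)
                   (fun s => proj2_sig s)) as [g hg].
  apply hJ. exists (fun t => g (f t)). intros y z e. apply hf.
  apply (eq_sig_hprop (fun _ => proof_irrelevance _)).
  rewrite <- (hg (f y)), <- (hg (f z)), e. reflexivity.
Qed.

Lemma bounded_on_segment beta (F : T -> T) :
  exists u, forall a, lt a beta -> lt (F a) u.
Proof.
  destruct (small_family_bounded {a | lt a beta} (fun a => F (proj1_sig a)))
    as [u hu].
  - destruct hk as [_ [hcard _]]. apply hcard.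
  - exists u. intros a ha. exact (hu (exist _ a ha)).
Qed.

Lemma bounded_sequence (F : nat -> T) : exists u, forall n, lt (F n) u.
Proof.
  apply small_family_bounded. destruct hk as [_ [_ [_ hunc]]]. exact hunc.
Qed.

Lemma ord_unbounded x : exists y, lt x y.
Proof.
  destruct (small_family_bounded unit (fun _ => x)) as [u hu].
  - intros [f hf]. destruct hk as [_ [_ [_ hunc]]]. apply hunc.
    exists (fun _ => 0). intros y z _. apply hf. destruct (f y), (f z). reflexivity.
  - exists u. exact (hu tt).
Qed.

Lemma ord_upper a b : exists w, lt a w /\ lt b w.
Proof.
  destruct (ord_max a b) as (m & ham & hbm & _).
  destruct (ord_unbounded m) as [w hw].
  exists w. split; eapply ord_le_lt_trans; eauto.
Qed.

Lemma succ_exists x : exists m, is_succ lt x m.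
Proof.
  destruct (ord_unbounded x) as [y hy].
  destruct (ord_least (lt x) y hy) as (m & hxm & hmin).
  exists m. split; assumption.
Qed.

Lemma succ_pred_unique l l' m : is_succ lt l m -> is_succ lt l' m -> l = l'.
Proof.
  intros [hlm hl] [hlm' hl'].
  destruct (ord_total l l') as [h | [h | h]]; [exfalso | exact h | exfalso];
    apply (ord_irrefl m).
  - exact (ord_le_lt_trans _ _ _ (hl _ h) hlm').
  - exact (ord_le_lt_trans _ _ _ (hl' _ h) hlm).
Qed.

Lemma le_of_lt_succ l m a : is_succ lt l m -> lt a m -> le lt a l.
Proof.
  intros [_ hl] ham. destruct (ord_total a l) as [h | [h | h]]; unfold le; auto.
  exfalso. apply (ord_irrefl m). exact (ord_le_lt_trans _ _ _ (hl a h) ham).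
Qed.

Lemma increasing_le (f : nat -> T) :
  (forall n, lt (f n) (f (S n))) -> forall n k, le lt (f n) (f (n + k)).
Proof.
  intros hstep n k. induction k as [| k IH].
  - rewrite Nat.add_0_r. now right.
  - rewrite Nat.add_succ_r. left. exact (ord_le_lt_trans _ _ _ IH (hstep _)).
Qed.

Lemma omega_sup (f : nat -> T) :
  (forall n, lt (f n) (f (S n))) ->
  exists g, (forall n, lt (f n) g) /\ forall x, lt x g -> exists n, lt x (f n).
Proof.
  intro hstep. destruct (bounded_sequence f) as [u hu].
  destruct (ord_least (fun u => forall n, lt (f n) u) u hu) as (g & hg & hmin).
  exists g. split; [exact hg |]. intros x hx. apply NNPP. intro hno.
  assert (hub : forall n, lt (f n) x).
  { intro n. destruct (ord_total (f n) x) as [h | [h | h]]; [exact h | |];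
      exfalso; apply hno; exists (S n).
    - rewrite <- h. apply hstep.
    - exact (ord_trans _ _ _ h (hstep n)). }
  apply (ord_irrefl x). exact (ord_lt_le_trans _ _ _ hx (hmin x hub)).
Qed.

Section ClubFamily.

Variable C : T -> T -> Prop.
Hypothesis hC : forall a, club lt (C a).

Lemma club_catch_up gm :
  exists u, lt gm u /\
    forall a, lt a gm -> exists c, C a c /\ lt gm c /\ lt c u.
Proof.
  assert (habove : forall a, exists c, C a c /\ lt gm c).
  { intro a. destruct (ord_unbounded gm) as [y hy].
    destruct (proj2 (hC a) y) as (c & hc & hyc).
    exists c. split; [exact hc | exact (ord_lt_le_trans _ _ _ hy hyc)]. }
  destruct (choice _ habove) as [m hm].
  destruct (bounded_on_segment gm m) as [u0 hu0].
  destruct (ord_upper gm u0) as (u & hgu & hu0u).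
  exists u. split; [exact hgu |]. intros a ha. exists (m a).
  destruct (hm a) as [hma hgma].
  split; [exact hma | split; [exact hgma | exact (ord_trans _ _ _ (hu0 a ha) hu0u)]].
Qed.

(* The supremum of β < h(β) < h(h(β)) < ..., where each step catches up with
   every [C a] for [a] below the previous point. *)
Lemma diag_inter_cofinal beta :
  exists g, lt beta g /\ forall a, lt a g -> C a g.
Proof.
  destruct (choice _ club_catch_up) as [h hh].
  pose (gam n := Nat.iter n h beta).
  assert (hstep : forall n, lt (gam n) (gam (S n))) by (intro n; apply hh).
  destruct (omega_sup gam hstep) as (g & hg & hbelow).
  exists g. split; [exact (hg 0) |]. intros a ha.
  destruct (hbelow a ha) as [k1 hk1].
  apply (proj1 (hC a)).
  - split; [exists beta; exact (hg 0) |]. intros n hn.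
    destruct (hbelow n hn) as [k hk']. exists (gam (S k)).
    split; [exact (ord_trans _ _ _ hk' (hstep k)) | apply hg].
  - intros n hn. destruct (hbelow n hn) as [k2 hk2].
    assert (hk1k : le lt (gam k1) (gam (k1 + k2))) by now apply increasing_le.
    assert (hk2k : le lt (gam k2) (gam (k1 + k2)))
      by (rewrite Nat.add_comm; now apply increasing_le).
    destruct (proj2 (hh (gam (k1 + k2))) a (ord_lt_le_trans _ _ _ hk1 hk1k))
      as (c & hc & hkc & hck).
    exists c. split; [exact hc | split].
    + exact (ord_trans _ _ _ (ord_lt_le_trans _ _ _ hk2 hk2k) hkc).
    + exact (ord_trans _ _ _ hck (hg (S (k1 + k2)))).
Qed.

Lemma diag_inter_club : club lt (fun x => forall a, lt a x -> C a x).
Proof.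
  split.
  - intros g hg hD a ha. apply (proj1 (hC a)); [exact hg |]. intros n hn.
    destruct (ord_max n a) as (w & hnw & haw & hw).
    assert (hwg : lt w g) by (destruct hw as [-> | ->]; assumption).
    destruct (hD w hwg) as (c & hc & hwc & hcg). exists c.
    split; [apply hc; exact (ord_le_lt_trans _ _ _ haw hwc) |].
    split; [exact (ord_le_lt_trans _ _ _ hnw hwc) | exact hcg].
  - intro b. destruct (diag_inter_cofinal b) as (g & hbg & hg).
    exists g. split; [exact hg | now left].
Qed.

End ClubFamily.

Lemma club_tail (C : T -> Prop) z :
  club lt C -> club lt (fun x => C x /\ lt z x).
Proof.
  intros [hcl hcof]. split.
  - intros g hg hD. split.
    + apply hcl; [exact hg |]. intros n hn.
      destruct (hD n hn) as (c & [hc _] & hnc & hcg). eauto.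
    + destruct hg as [[n hn] _]. destruct (hD n hn) as (c & [_ hzc] & _ & hcg).
      exact (ord_trans _ _ _ hzc hcg).
  - intro b. destruct (ord_upper b z) as (w & hbw & hzw).
    destruct (hcof w) as (c & hc & hwc). exists c.
    split; [split; [exact hc | exact (ord_lt_le_trans _ _ _ hzw hwc)] |].
    left. exact (ord_lt_le_trans _ _ _ hbw hwc).
Qed.

Lemma stationary_mono (A B : T -> Prop) :
  (forall x, A x -> B x) -> stationary lt A -> stationary lt B.
Proof. intros hAB hA C hC. destruct (hA C hC) as (x & hx & hCx). eauto. Qed.

Lemma stationary_nonempty (S : T -> Prop) : stationary lt S -> exists x, S x.
Proof.
  intro hS. destruct (hS (fun _ => True)) as (x & hx & _); [| eauto].
  split; [intros ? ? ?; exact I |]. intro b. exists b. split; [exact I | now right].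
Qed.

Lemma nonstationary_disjoint_club (S : T -> Prop) :
  nonstationary lt S -> exists C, club lt C /\ forall x, C x -> ~ S x.
Proof.
  intro hS. apply NNPP. intro hno. apply hS. intros C hC. apply NNPP. intro hdisj.
  apply hno. exists C. split; [exact hC |]. intros x hCx hSx. eauto.
Qed.

Lemma stationary_tail (S : T -> Prop) z :
  stationary lt S -> stationary lt (fun x => S x /\ lt z x).
Proof.
  intros hS C hC. destruct (hS _ (club_tail C z hC)) as (x & hx & hCx & hzx).
  eauto.
Qed.

Lemma pressing_down (S : T -> Prop) (P : T -> T -> Prop) :
  stationary lt S -> (forall x, S x -> exists a, lt a x /\ P a x) ->
  exists a, stationary lt (fun x => S x /\ P a x).
Proof.
  intros hS hP. apply NNPP. intro hno.
  assert (hdisj : forall a, exists C, club lt C /\ forall x, C x -> ~ (S x /\ P a x)).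
  { intro a. apply nonstationary_disjoint_club. intro h. apply hno. eauto. }
  destruct (choice _ hdisj) as [C hC].
  destruct (hS _ (diag_inter_club C (fun a => proj1 (hC a)))) as (x & hx & hD).
  destruct (hP x hx) as (a & hax & hPa).
  exact (proj2 (hC a) x (hD a hax) (conj hx hPa)).
Qed.

Lemma stationary_union (A B : T -> Prop) :
  stationary lt (fun x => A x \/ B x) -> stationary lt A \/ stationary lt B.
Proof.
  intro hAB. destruct (stationary_nonempty _ hAB) as [b _].
  destruct (ord_unbounded b) as [b' hbb'].
  destruct (pressing_down _ (fun a x => (a = b /\ A x) \/ (a <> b /\ B x))
              (stationary_tail _ b' hAB)) as [a ha].
  - intros x [[hA | hB] hx].
    + exists b. split; [exact (ord_trans _ _ _ hbb' hx) | now left].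
    + exists b'. split; [exact hx | right; split; [| exact hB]].
      intros ->. exact (ord_irrefl _ hbb').
  - destruct (classic (a = b)); [left | right];
      refine (stationary_mono _ _ _ ha); intros x [_ [[? ?] | [? ?]]]; tauto.
Qed.

Variable I : (T -> Prop) -> Prop.
Hypothesis hI : is_ideal lt I.
Hypothesis hINS : forall A, I A -> nonstationary lt A.

Definition ideal_trace (Q Y : T -> Prop) : Prop :=
  (forall x, Y x -> Lset lt x) /\ I Y /\
  (forall l, Bset lt Y l -> Q l) /\ stationary lt (Bset lt Y).

Definition catches (A : T -> Prop) : Prop :=
  forall Q : T -> Prop,
    (forall x, Q x -> is_limit lt x) -> stationary lt Q ->
    (forall l, Q l -> Bset lt A l) -> exists Y, ideal_trace Q Y.

Lemma catches_shrink (A Q Q' : T -> Prop) :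
  catches A -> (forall x, Q' x -> Q x) -> (forall x, Q x -> is_limit lt x) ->
  stationary lt Q' -> (forall l, Q' l -> Bset lt A l) ->
  exists Y, ideal_trace Q Y.
Proof.
  intros hA hQ' hQl hs hsucc.
  destruct (hA Q') as (Y & hL & hIY & hB & hBs); auto.
  exists Y. repeat split; auto.
Qed.

Lemma catches_base (A : T -> Prop) : I A -> catches A.
Proof.
  intros hA Q hQl hQs hsucc.
  exists (fun m => A m /\ exists l, Q l /\ is_succ lt l m).
  split; [| split; [| split]].
  - intros m [_ (l & hl & hlm)]. exists l. auto.
  - apply (proj1 hI) with A; [exact hA |]. now intros x [? _].
  - intros l (m & [_ (l' & hl' & hl'm)] & hlm).
    now rewrite (succ_pred_unique _ _ _ hlm hl'm).
  - refine (stationary_mono _ _ _ hQs). intros l hl.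
    destruct (hsucc l hl) as (m & hm & hlm). exists m. eauto 6.
Qed.

Lemma catches_subset (A B : T -> Prop) :
  catches B -> (forall x, A x -> B x) -> catches A.
Proof.
  intros hB hAB Q hQl hQs hsucc. apply hB; auto.
  intros l hl. destruct (hsucc l hl) as (m & hm & hlm). exists m. auto.
Qed.

Lemma catches_union2 (A B : T -> Prop) :
  catches A -> catches B -> catches (fun x => A x \/ B x).
Proof.
  intros hA hB Q hQl hQs hsucc.
  assert (hsplit : stationary lt (fun l => (Q l /\ Bset lt A l) \/ (Q l /\ Bset lt B l))).
  { refine (stationary_mono _ _ _ hQs). intros l hl.
    destruct (hsucc l hl) as (m & [hm | hm] & hlm); [left | right];
      split; [exact hl | exists m; auto | exact hl | exists m; auto]. }
  destruct (stationary_union _ _ hsplit) as [h | h];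
    [eapply (catches_shrink A Q _ hA) | eapply (catches_shrink B Q _ hB)];
    try exact h; auto; now intros x [? ?].
Qed.

Lemma catches_union beta (X : T -> T -> Prop) :
  (forall a, lt a beta -> catches (X a)) ->
  catches (fun x => exists a, lt a beta /\ X a x).
Proof.
  intros hX Q hQl hQs hsucc.
  destruct (pressing_down (fun l => Q l /\ lt beta l)
              (fun a l => lt a beta /\ Bset lt (X a) l)) as [a ha].
  - now apply stationary_tail.
  - intros l [hl hbl]. destruct (hsucc l hl) as (m & (a & hab & hXm) & hlm).
    exists a. split; [exact (ord_trans _ _ _ hab hbl) | split; [exact hab | exists m; auto]].
  - destruct (stationary_nonempty _ ha) as (x & _ & hab & _).
    refine (catches_shrink (X a) Q _ (hX a hab) _ hQl ha _).
    + now intros x' [[? _] _].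
    + now intros l [_ [_ ?]].
Qed.

Lemma catches_diag (A : T -> Prop) (X : T -> T -> Prop) :
  I A -> (forall a, A a -> catches (X a)) -> catches (diag_union lt A X).
Proof.
  intros hA hX Q hQl hQs hsucc.
  pose (Pre l := exists a, lt a l /\ A a /\ Bset lt (X a) l).
  assert (hsplit : stationary lt (fun l => (Q l /\ Pre l) \/ (A l /\ Q l))).
  { refine (stationary_mono _ _ _ hQs). intros l hl.
    destruct (hsucc l hl) as (m & (a & ham & haA & hXm) & hlm).
    destruct (le_of_lt_succ _ _ _ hlm ham) as [hal | ->]; [left | right].
    - split; [exact hl |]. exists a. split; [exact hal |].
      split; [exact haA | exists m; auto].
    - auto. }
  destruct (stationary_union _ _ hsplit) as [h | h].
  - destruct (pressing_down _ (fun a l => A a /\ Bset lt (X a) l) h) as [a ha].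
    { intros l [_ (a & hal & haA & hXl)]. exists a. auto. }
    destruct (stationary_nonempty _ ha) as (x & _ & haA & _).
    refine (catches_shrink (X a) Q _ (hX a haA) _ hQl ha _).
    + now intros x' [[? _] _].
    + now intros l [_ [_ ?]].
  - exfalso. apply (hINS (fun l => A l /\ Q l)); [| exact h].
    apply (proj1 hI) with A; [exact hA |]. now intros x [? _].
Qed.

Lemma Pcl_catches (A : T -> Prop) : Pcl lt I A -> catches A.
Proof.
  induction 1.
  - now apply catches_base.
  - now apply catches_subset with B.
  - now apply catches_union2.
  - now apply catches_union.
  - now apply catches_diag.
Qed.

End Kappa.

Theorem theorem3p12 (T : Type) (lt : T -> T -> Prop)
  (hk : regular_uncountable_cardinal lt)
  (I : (T -> Prop) -> Prop) (hI : is_ideal lt I)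
  (hINS : forall A, I A -> nonstationary lt A)
  (hL : Pcl lt I (Lset lt)) :
  forall Q : T -> Prop,
    (forall x, Q x -> is_limit lt x) -> stationary lt Q ->
    exists Y : T -> Prop,
      (forall x, Y x -> Lset lt x) /\ I Y /\
      (forall l, Bset lt Y l -> Q l) /\ stationary lt (Bset lt Y).
Proof.
  intros Q hQl hQs.
  apply (Pcl_catches lt hk I hI hINS _ hL Q hQl hQs).
  intros l hl. destruct (succ_exists lt hk l) as [m hm].
  exists m. split; [exists l; auto | exact hm].
Qed.
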